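(* Let $n\ge1$ be an integer and write $n=2m+p$ with integers $m\ge0$ and $p\in\{0,1\}$ (when $p=0$ we have $m\ge1$). Let $R_n$ be the $n$-row rhombus of coins and $R_n^{\mathrm{flip}}$ its horizontal mirror image, as defined in the context. Then the minimum number of moves needed to turn $R_n$ into a translate of $R_n^{\mathrm{flip}}$ is $$\mu(R_n,R_n^{\mathrm{flip}})=\begin{cases}2T_m=m^2+m, & p=1,\\ T_m+T_{m-1}=m^2, & p=0.\end{cases}$$ In both cases this equals $\lfloor n^2/4\rfloor$.
   Context: For an integer $k\ge 0$, $T_k=k(k+1)/2$ is the $k$-th triangular number, so $T_0=0$. Coins are placed at points of the triangular lattice $L=\{a\mathbf u+b\mathbf v: a,b\in\mathbb Z\}\subset\mathbb R^2$, where $\mathbf u=(1,0)$ and $\mathbf v=(1/2,\sqrt3/2)$. The $n$-row rhombus of coins is $R_n=\{a\mathbf u+b\mathbf v: a,b\in\{0,1,\dots,n-1\}\}$. It has $n^2$ coins. Its horizontal flip is $R_n^{\mathrm{flip}}=\{(-x,y):(x,y)\in R_n\}$, the mirror image of $R_n$ in a vertical line. This set is again contained in $L$. A move takes a single coin and places it at any other position. For finite sets $S,S'\subset\mathbb R^2$ with $|S|=|S'|$, the minimum number of moves to transform $S$ into some translate of $S'$ is $\mu(S,S')=|S|-\max_{t\in\mathbb R^2}|S\cap(S'+t)|$. Coins in the overlap stay in place, and each remaining coin is moved once. *)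

From Stdlib Require Import Reals Lra Lia List Arith.
Import ListNotations.
Open Scope R_scope.

Definition point : Type := (R * R)%type.

Definition pt_eq_dec (p q : point) : {p = q} + {p <> q}.
Proof.
  destruct p as [x1 y1], q as [x2 y2].
  destruct (Req_EM_T x1 x2) as [e1|n1]; [destruct (Req_EM_T y1 y2) as [e2|n2]|].
  - left; subst; reflexivity.
  - right; intro H; inversion H; contradiction.
  - right; intro H; inversion H; contradiction.
Defined.

Definition T (k : nat) : nat := (k * (k + 1) / 2)%nat.

Definition u : point := (1, 0).
Definition v : point := (1 / 2, sqrt 3 / 2).
Definition lat (a b : nat) : point :=
  (INR a * fst u + INR b * fst v, INR a * snd u + INR b * snd v).

(* R_n = { a u + b v : a, b in {0,...,n-1} }, listed without repetition *)
Definition rhombus (n : nat) : list point :=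
  flat_map (fun a => map (fun b => lat a b) (seq 0 n)) (seq 0 n).

Definition flip (p : point) : point := (- fst p, snd p).
Definition rhombus_flip (n : nat) : list point := map flip (rhombus n).

Definition translate (t : point) (p : point) : point :=
  (fst p + fst t, snd p + snd t).

Definition overlap (S S' : list point) (t : point) : nat :=
  length (filter (fun p => if in_dec pt_eq_dec p (map (translate t) S')
                           then true else false) S).

Definition is_max_overlap (S S' : list point) (M : nat) : Prop :=
  (exists t : point, overlap S S' t = M) /\
  (forall t : point, (overlap S S' t <= M)%nat).

Definition is_mu (S S' : list point) (k : nat) : Prop :=
  exists M, is_max_overlap S S' M /\ k = (length S - M)%nat.

From Stdlib Require Import Reals List Arith.
From Stdlib Require Import Lra Lia ZArith Classical_Prop.
Local Open Scope nat_scope.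

(* Comparing both coordinates, a coin [lat a b] of R_n lies on
   the translated flipped coin [t + flip (lat a' b')] only if
   a + b + a' = tx + ty / sqrt 3; hence for a fixed translation t all
   coincidences share one value K = a + b + a' (the "level" of t).  In row a
   of R_n the coins hit are then among the b with K-n+1-a <= b <= K-a, so row
   a contributes at most max(0, n - |K-n+1-a|) coins.  Pairing row j with row
   n-1-j, such a tent-shaped profile never beats the profile n - |h - a| with
   h = n/2, and this profile is attained exactly by the translation of level
   K = h + n - 1.  Therefore the maximal overlap is sum_a (n - |h - a|), and
   mu = sum_a |h - a| = T h + T (n-1-h), which is the case distinction of the
   theorem and equals floor(n^2/4). *)

Lemma length_filter_flat_map {A B : Type} (f : B -> bool) (g : A -> list B) (l : list A) :
  length (filter f (flat_map g l)) = list_sum (map (fun x => length (filter f (g x))) l).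
Proof.
  induction l as [|x l IH]; simpl; [reflexivity|].
  now rewrite filter_app, length_app, IH.
Qed.

Lemma length_filter_map {A B : Type} (f : B -> bool) (h : A -> B) (l : list A) :
  length (filter f (map h l)) = length (filter (fun x => f (h x)) l).
Proof.
  induction l as [|x l IH]; simpl; [reflexivity|].
  destruct (f (h x)); simpl; congruence.
Qed.

Lemma length_filter_mono {A : Type} (f g : A -> bool) (l : list A) :
  (forall x, In x l -> f x = true -> g x = true) ->
  length (filter f l) <= length (filter g l).
Proof.
  induction l as [|x l IH]; simpl; intros Hfg; [lia|].
  specialize (IH (fun y Hy => Hfg y (or_intror Hy))).
  destruct (f x) eqn:Ef.
  - rewrite (Hfg x (or_introl eq_refl) Ef); simpl; lia.
  - destruct (g x); simpl; lia.
Qed.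

Lemma list_sum_complement {A : Type} (c : nat) (d : A -> nat) (l : list A) :
  (forall x, In x l -> d x <= c) ->
  list_sum (map (fun x => c - d x) l) + list_sum (map d l) = c * length l.
Proof.
  induction l as [|x l IH]; simpl; intros Hd; [lia|].
  specialize (IH (fun y Hy => Hd y (or_intror Hy))).
  specialize (Hd x (or_introl eq_refl)). lia.
Qed.

Lemma sum_le_by_pairs (n : nat) (F G : nat -> nat) :
  (forall j, 2 * j + 2 <= n -> F j + F (n - 1 - j) <= G j + G (n - 1 - j)) ->
  (forall j, 2 * j + 1 = n -> F j <= G j) ->
  list_sum (map F (seq 0 n)) <= list_sum (map G (seq 0 n)).
Proof.
  intros Hpair Hmid.
  assert (Hinner : forall k i, 2 * i + k = n ->
            list_sum (map F (seq i k)) <= list_sum (map G (seq i k))).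
  { induction k as [k IH] using lt_wf_ind; intros i Hi.
    destruct k as [|[|k]].
    - simpl; lia.
    - specialize (Hmid i ltac:(lia)); simpl; lia.
    - change (seq i (S (S k))) with (i :: seq (S i) (S k)).
      rewrite seq_S, !map_cons, !map_app; simpl list_sum; rewrite !list_sum_app; simpl.
      specialize (IH k ltac:(lia) (S i) ltac:(lia)).
      specialize (Hpair i ltac:(lia)).
      replace (S (i + k)) with (n - 1 - i) by lia. lia. }
  exact (Hinner n 0 ltac:(lia)).
Qed.

Lemma T_succ (k : nat) : T (S k) = T k + S k.
Proof.
  unfold T. replace (S k * (S k + 1)) with (k * (k + 1) + S k * 2) by lia.
  now rewrite Nat.div_add.
Qed.

Lemma T_double (k : nat) : 2 * T k = k * (k + 1).
Proof. induction k as [|k IH]; [reflexivity|]. rewrite T_succ. lia. Qed.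

Definition dist (x y : nat) : nat := x - y + (y - x).

Lemma sum_descending (h : nat) : list_sum (map (fun a => h - a) (seq 0 (S h))) = T h.
Proof.
  induction h as [|h IH]; [reflexivity|].
  rewrite <- cons_seq, <- seq_shift, map_cons, map_map.
  change (fun x => S h - S x) with (fun x => h - x).
  change (list_sum (?x :: ?l)) with (x + list_sum l).
  rewrite IH, T_succ. lia.
Qed.

Lemma sum_ascending (h k : nat) : list_sum (map (fun a => a - h) (seq (S h) k)) = T k.
Proof.
  induction k as [|k IH]; [reflexivity|].
  rewrite seq_S, map_app, list_sum_app, IH, T_succ.
  cbn [map list_sum fold_right]. lia.
Qed.

Lemma sum_dist (n h : nat) : h < n ->
  list_sum (map (dist h) (seq 0 n)) = T h + T (n - 1 - h).
Proof.
  intros Hh.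
  replace n with (S h + (n - 1 - h)) at 1 by lia.
  rewrite seq_app, map_app, list_sum_app; simpl (0 + S h).
  rewrite <- sum_descending, <- (sum_ascending h (n - 1 - h)).
  f_equal; f_equal; apply map_ext_in; intros a Ha; apply in_seq in Ha; unfold dist; lia.
Qed.

Local Open Scope R_scope.

Lemma coincidence_level (a b a' b' : nat) (t : point) :
  lat a b = translate t (flip (lat a' b')) ->
  INR (a + b + a') = fst t + snd t / sqrt 3.
Proof.
  destruct t as [tx ty].
  unfold lat, translate, flip, u, v; simpl. intros E.
  injection E as Ex Ey.
  assert (Hs : 0 < sqrt 3) by (apply sqrt_lt_R0; lra).
  replace ty with ((INR b - INR b') * (sqrt 3 / 2)) by lra.
  rewrite !plus_INR. field_simplify; [lra | lra].
Qed.

Lemma same_level (a b a' b' c d c' d' : nat) (t : point) :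
  lat a b = translate t (flip (lat a' b')) ->
  lat c d = translate t (flip (lat c' d')) ->
  (a + b + a' = c + d + c')%nat.
Proof.
  intros E1 E2. apply INR_eq.
  now rewrite (coincidence_level _ _ _ _ _ E1), (coincidence_level _ _ _ _ _ E2).
Qed.

Lemma common_level (t : point) : exists K : nat, forall a b a' b',
  lat a b = translate t (flip (lat a' b')) -> (a + b + a')%nat = K.
Proof.
  destruct (classic (exists a b a' b', lat a b = translate t (flip (lat a' b'))))
    as [[a0 [b0 [a0' [b0' E0]]]] | Hnone].
  - exists (a0 + b0 + a0')%nat. intros a b a' b' E. exact (same_level _ _ _ _ _ _ _ _ _ E E0).
  - exists 0%nat. intros a b a' b' E. exfalso. apply Hnone. eauto.
Qed.

Local Close Scope R_scope.

Lemma in_rhombus (n : nat) (q : point) :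
  In q (rhombus n) <-> exists a b, a < n /\ b < n /\ q = lat a b.
Proof.
  unfold rhombus. rewrite in_flat_map. split.
  - intros [a [Ha Hq]]. apply in_map_iff in Hq. destruct Hq as [b [<- Hb]].
    apply in_seq in Ha. apply in_seq in Hb. exists a, b. repeat split; lia.
  - intros [a [b [Ha [Hb ->]]]]. exists a. split; [apply in_seq; lia|].
    apply in_map. apply in_seq; lia.
Qed.

Lemma length_rhombus (n : nat) : length (rhombus n) = n * n.
Proof.
  unfold rhombus. rewrite (flat_map_constant_length (c := n)), length_seq; [lia|].
  intros a _. now rewrite length_map, length_seq.
Qed.

Definition hit (n : nat) (t : point) (q : point) : bool :=
  if in_dec pt_eq_dec q (map (translate t) (rhombus_flip n)) then true else false.

Lemma hit_spec (n : nat) (t q : point) :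
  hit n t q = true <->
  exists a' b', a' < n /\ b' < n /\ q = translate t (flip (lat a' b')).
Proof.
  unfold hit, rhombus_flip. destruct (in_dec _ _ _) as [Hin|Hin]; split; try discriminate.
  - intros _. rewrite map_map, in_map_iff in Hin. destruct Hin as [r [<- Hr]].
    apply in_rhombus in Hr. destruct Hr as [a' [b' [Ha' [Hb' ->]]]]. eauto.
  - intros _. reflexivity.
  - intros [a' [b' [Ha' [Hb' ->]]]]. exfalso. apply Hin.
    rewrite map_map. apply (in_map (fun r => translate t (flip r))), in_rhombus. eauto.
Qed.

Definition row_hits (n : nat) (t : point) (a : nat) : nat :=
  length (filter (fun b => hit n t (lat a b)) (seq 0 n)).

Lemma overlap_by_rows (n : nat) (t : point) :
  overlap (rhombus n) (rhombus_flip n) t = list_sum (map (row_hits n t) (seq 0 n)).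
Proof.
  change (overlap (rhombus n) (rhombus_flip n) t) with (length (filter (hit n t) (rhombus n))).
  unfold rhombus. rewrite length_filter_flat_map. f_equal.
  apply map_ext; intro a. apply length_filter_map.
Qed.

Definition between (lo hi : Z) (b : nat) : bool :=
  (Z.leb lo (Z.of_nat b) && Z.leb (Z.of_nat b) hi)%bool.

Lemma count_between (lo hi : Z) (k s : nat) :
  Z.of_nat (length (filter (between lo hi) (seq s k))) =
  Z.max 0 (Z.min hi (Z.of_nat s + Z.of_nat k - 1) + 1 - Z.max (Z.of_nat s) lo).
Proof.
  revert s. induction k as [|k IH]; intros s; simpl; [lia|].
  specialize (IH (S s)). unfold between at 1.
  destruct (Z.leb_spec lo (Z.of_nat s)), (Z.leb_spec (Z.of_nat s) hi);
    simpl; rewrite ?Nat2Z.inj_succ, ?IH; lia.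
Qed.

Lemma row_hits_le (n K : nat) (t : point) (a : nat) :
  (forall a b a' b', lat a b = translate t (flip (lat a' b')) -> a + b + a' = K) ->
  (Z.of_nat (row_hits n t a) <=
     Z.max 0 (Z.of_nat n - Z.abs (Z.of_nat K - Z.of_nat n + 1 - Z.of_nat a)))%Z.
Proof.
  intros Hlevel.
  set (lo := (Z.of_nat K - Z.of_nat n + 1 - Z.of_nat a)%Z).
  assert (Hwin : row_hits n t a <= length (filter (between lo (Z.of_nat K - Z.of_nat a)) (seq 0 n))).
  { apply length_filter_mono. intros b Hb Hhit. apply in_seq in Hb.
    apply hit_spec in Hhit. destruct Hhit as [a' [b' [Ha' [Hb' E]]]].
    specialize (Hlevel _ _ _ _ E).
    unfold between. apply andb_true_intro; split; apply Z.leb_le; lia. }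
  pose proof (count_between lo (Z.of_nat K - Z.of_nat a) n 0). lia.
Qed.

Lemma half_bounds (n : nat) : 2 * (n / 2) <= n <= 2 * (n / 2) + 1.
Proof. pose proof (Nat.div_mod n 2); pose proof (Nat.mod_upper_bound n 2); lia. Qed.

Definition best_shift (n : nat) : point := (INR (n / 2 + n - 1), 0%R).

Lemma row_hits_best (n a : nat) : a < n ->
  row_hits n (best_shift n) a = n - dist (n / 2) a.
Proof.
  intros Ha.
  set (h := n / 2). set (K := h + n - 1).
  pose proof (half_bounds n) as Hh. fold h in Hh.
  assert (Hbase : lat h 0 = translate (best_shift n) (flip (lat (n - 1) 0))).
  { unfold lat, translate, flip, u, v, best_shift; cbn [fst snd]. fold h.
    rewrite !minus_INR, plus_INR by lia.
    change (INR 0) with 0%R. change (INR 1) with 1%R. f_equal; lra. }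
  unfold row_hits.
  rewrite (filter_ext_in _ (between (Z.of_nat h - Z.of_nat a) (Z.of_nat K - Z.of_nat a))).
  - apply Nat2Z.inj. rewrite count_between. unfold dist. lia.
  - intros b Hb. apply in_seq in Hb.
    destruct (between _ _ b) eqn:Hwin; unfold between in Hwin.
    + (* inside the window, coin (K-a-b, b) of the flip lands on (a, b) *)
      apply andb_prop in Hwin as [Hlo Hhi]. apply Z.leb_le in Hlo, Hhi.
      apply hit_spec. exists (K - a - b), b. split; [lia|]. split; [lia|].
      unfold lat, translate, flip, u, v, best_shift; cbn [fst snd]. fold h. fold K.
      rewrite !minus_INR by lia. f_equal; lra.
    + (* outside the window a coincidence would have a level other than K *)
      destruct (hit _ _ _) eqn:Ehit; [exfalso|reflexivity].
      apply hit_spec in Ehit as [a' [b' [Ha' [Hb' E]]]].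
      pose proof (same_level _ _ _ _ _ _ _ _ _ E Hbase).
      apply Bool.andb_false_iff in Hwin as [Hw|Hw]; apply Z.leb_gt in Hw; lia.
Qed.

Definition best_profile (n a : nat) : nat := n - dist (n / 2) a.

(* No translation beats the optimal profile: pair row j with row n-1-j. *)
Lemma overlap_le (n : nat) (t : point) :
  overlap (rhombus n) (rhombus_flip n) t <= list_sum (map (best_profile n) (seq 0 n)).
Proof.
  destruct (common_level t) as [K HK].
  pose proof (half_bounds n).
  rewrite overlap_by_rows. apply sum_le_by_pairs; unfold best_profile, dist.
  - intros j Hj.
    pose proof (row_hits_le n K t j HK). pose proof (row_hits_le n K t (n - 1 - j) HK). lia.
  - intros j Hj. pose proof (row_hits_le n K t j HK). lia.
Qed.

Lemma overlap_best (n : nat) :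
  overlap (rhombus n) (rhombus_flip n) (best_shift n) = list_sum (map (best_profile n) (seq 0 n)).
Proof.
  rewrite overlap_by_rows. f_equal. apply map_ext_in.
  intros a Ha. apply in_seq in Ha. apply row_hits_best. lia.
Qed.

Lemma mu_rhombus_flip (n : nat) : 1 <= n ->
  is_mu (rhombus n) (rhombus_flip n) (T (n / 2) + T (n - 1 - n / 2)).
Proof.
  intros Hn. pose proof (half_bounds n).
  exists (list_sum (map (best_profile n) (seq 0 n))). split; [split|].
  - exists (best_shift n). apply overlap_best.
  - apply overlap_le.
  - rewrite length_rhombus, <- sum_dist by lia.
    pose proof (list_sum_complement n (dist (n / 2)) (seq 0 n)) as Hsum.
    rewrite length_seq in Hsum. unfold best_profile.
    enough (Hdist : forall a, In a (seq 0 n) -> dist (n / 2) a <= n)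
      by (specialize (Hsum Hdist); lia).
    intros a Ha. apply in_seq in Ha. unfold dist. lia.
Qed.

Lemma triangular_floor (m p : nat) : p <= 1 -> 1 <= 2 * m + p ->
  T m + T (m + p - 1) = (2 * m + p) * (2 * m + p) / 4.
Proof.
  intros Hp Hn. apply Nat.div_unique with p; [lia|].
  pose proof (T_double m). pose proof (T_double (m + p - 1)).
  destruct p as [|[|]]; [destruct m as [|m]|..]; nia.
Qed.

Theorem mainTheorem2 (n m p : nat) (hn : (1 <= n)%nat) (hp : (p <= 1)%nat)
  (hnmp : n = (2 * m + p)%nat) :
  is_mu (rhombus n) (rhombus_flip n)
    (if Nat.eqb p 1 then (2 * T m)%nat else (T m + T (m - 1))%nat) /\
  (if Nat.eqb p 1 then (2 * T m)%nat else (T m + T (m - 1))%nat)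
    = (n * n / 4)%nat.
Proof.
  assert (Hhalf : n / 2 = m) by (symmetry; apply Nat.div_unique with p; lia).
  assert (Hvalue : (if Nat.eqb p 1 then 2 * T m else T m + T (m - 1)) = T m + T (m + p - 1)).
  { destruct p as [|[|p]]; [| |lia]; cbn [Nat.eqb].
    - now replace (m + 0 - 1) with (m - 1) by lia.
    - replace (m + 1 - 1) with m by lia. lia. }
  rewrite Hvalue. split.
  - replace (T m + T (m + p - 1)) with (T (n / 2) + T (n - 1 - n / 2))
      by (rewrite Hhalf; f_equal; f_equal; lia).
    now apply mu_rhombus_flip.
  - subst n. now apply triangular_floor.
Qed.
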